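(* Let $k,l\ge1$ with $k\ne l$ and $1\le r\le(2k+1)(2l+1)$. Let $\overline{\mathcal{B}}(2k+1,2l+1;r)$ be the subset of $\mathcal{B}(2k+1,2l+1;r)$ consisting of boards whose board partition $\begin{pmatrix}\lambda_1&\lambda_2&\lambda_3&\lambda_4\\ \delta_1&\delta_2&\delta_3&\delta_4\end{pmatrix}_c$ satisfies: (i) $\lambda_1\ge\lambda_i$ for all $i>1$; (ii) if $\lambda_1=\lambda_3$ then $\lambda_2\ge\lambda_4$; if in addition $\lambda_2=\lambda_4$ then $\delta_1\ge\delta_3$; and if further $\delta_1=\delta_3$ then $\delta_2\ge\delta_4$; (iii) if $\lambda_1=\lambda_2$ then $\lambda_3\ge\lambda_4$; if in addition $\lambda_3=\lambda_4$ then $\delta_2\ge\delta_4$; (iv) if $\lambda_1=\lambda_4$ then $\lambda_2\ge\lambda_3$; if in addition $\lambda_2=\lambda_3$ then $\delta_1\ge\delta_3$. Then: (1) $\overline{\mathcal{B}}(2k+1,2l+1;r)$ is a disjoint union of sets each consisting of all boards in $\mathcal{B}(2k+1,2l+1;r)$ with some fixed board partition; (2) every board of $\mathcal{B}(2k+1,2l+1;r)$ is equivalent under $\langle H,V\rangle$ to some board of $\overline{\mathcal{B}}(2k+1,2l+1;r)$; (3) if two boards of $\overline{\mathcal{B}}(2k+1,2l+1;r)$ are equivalent under $\langle H,V\rangle$, they have the same board partition.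
   Context: A $(2k+1)\times(2l+1)$ grid ($2k+1$ rows numbered top to bottom, $2l+1$ columns numbered left to right); $\mathcal{B}(2k+1,2l+1;r)$ is the set of boards, i.e. subsets of exactly $r$ blocked cells. The symmetry group is $\langle H,V\rangle=\{R_0,H,V,R_{180}\}$ ($H$: reflection across the horizontal midline; $V$: across the vertical midline; $R_{180}$: 180-degree rotation); boards are equivalent if some element maps one to the other. The grid is divided into nine regions: $\Lambda_1$ = rows $1..k$, cols $1..l$; $\Lambda_2$ = rows $1..k$, cols $l+2..2l+1$; $\Lambda_3$ = rows $k+2..2k+1$, cols $l+2..2l+1$; $\Lambda_4$ = rows $k+2..2k+1$, cols $1..l$; $\Delta_1$ = rows $1..k$, col $l+1$; $\Delta_2$ = row $k+1$, cols $l+2..2l+1$; $\Delta_3$ = rows $k+2..2k+1$, col $l+1$; $\Delta_4$ = row $k+1$, cols $1..l$; and the center cell $(k+1,l+1)$. The board partition $\begin{pmatrix}\lambda_1&\lambda_2&\lambda_3&\lambda_4\\ \delta_1&\delta_2&\delta_3&\delta_4\end{pmatrix}_c$ records the numbers of blocked cells $\lambda_i$ in $\Lambda_i$, $\delta_i$ in $\Delta_i$, and $c\in\{0,1\}$ at the center. *)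

From mathcomp Require Import all_boot.
Set Implicit Arguments. Unset Strict Implicit. Unset Printing Implicit Defensive.

(* Cells of the (2k+1) x (2l+1) grid, 0-indexed: row i (= paper row i+1),
   column j (= paper column j+1). *)
Definition cell (k l : nat) : finType := ('I_(2 * k + 1) * 'I_(2 * l + 1))%type.

(* A board: a set of blocked cells. *)
Definition board (k l : nat) := {set cell k l}.

Inductive sym := R0 | Hsym | Vsym | R180.

Definition sym_act (k l : nat) (g : sym) (x : cell k l) : cell k l :=
  match g with
  | R0 => x
  | Hsym => (rev_ord x.1, x.2)
  | Vsym => (x.1, rev_ord x.2)
  | R180 => (rev_ord x.1, rev_ord x.2)
  end.

Definition sym_board (k l : nat) (g : sym) (B : board k l) : board k l :=
  [set sym_act g x | x in B].

Definition equiv_boards (k l : nat) (B B' : board k l) : Prop :=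
  exists g : sym, B' = sym_board g B.

(* Regions (0-indexed rows/cols; middle row index k, middle column index l). *)
Section Regions.
Variables (k l : nat).
Definition count_in (B : board k l) (P : cell k l -> bool) : nat :=
  #|[set x in B | P x]|.

Definition lam1 B := count_in B (fun x => (x.1 < k) && (x.2 < l)).
Definition lam2 B := count_in B (fun x => (x.1 < k) && (l < x.2)).
Definition lam3 B := count_in B (fun x => (k < x.1) && (l < x.2)).
Definition lam4 B := count_in B (fun x => (k < x.1) && (x.2 < l)).
Definition del1 B := count_in B (fun x => (x.1 < k) && (x.2 == l :> nat)).
Definition del2 B := count_in B (fun x => (x.1 == k :> nat) && (l < x.2)).
Definition del3 B := count_in B (fun x => (k < x.1) && (x.2 == l :> nat)).
Definition del4 B := count_in B (fun x => (x.1 == k :> nat) && (x.2 < l)).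
Definition cen B := count_in B (fun x => (x.1 == k :> nat) && (x.2 == l :> nat)).
End Regions.

Definition board_partition (k l : nat) (B : board k l)
  : (nat * nat * nat * nat) * (nat * nat * nat * nat) * nat :=
  ((lam1 B, lam2 B, lam3 B, lam4 B), (del1 B, del2 B, del3 B, del4 B), cen B).

Definition in_B (k l r : nat) (B : board k l) : Prop := #|B| = r.

Definition in_Bbar (k l r : nat) (B : board k l) : Prop :=
  let l1 := lam1 B in let l2 := lam2 B in let l3 := lam3 B in let l4 := lam4 B in
  let d1 := del1 B in let d2 := del2 B in let d3 := del3 B in let d4 := del4 B in
  [/\ in_B r B,
      [/\ l2 <= l1, l3 <= l1 & l4 <= l1],
      (l1 = l3 -> l4 <= l2 /\
         (l2 = l4 -> d3 <= d1 /\ (d1 = d3 -> d4 <= d2))),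
      (l1 = l2 -> l4 <= l3 /\ (l3 = l4 -> d4 <= d2)) &
      (l1 = l4 -> l3 <= l2 /\ (l2 = l3 -> d3 <= d1))].

From mathcomp Require Import all_boot zify.
Set Implicit Arguments. Unset Strict Implicit. Unset Printing Implicit Defensive.

(* Each symmetry in <H,V> maps every region onto a region, so it acts on board
   partitions by permuting their entries, compatibly with its action on boards.
   Conditions (i)-(iv) are a lexicographic tie-breaking rule that selects a
   partition in every orbit of this action, and any two selected partitions in
   one orbit are equal; (1)-(3) follow at once. *)

Definition partition_t :=
  ((nat * nat * nat * nat) * (nat * nat * nat * nat) * nat)%type.

Definition sym_partition (g : sym) (p : partition_t) : partition_t :=
  let: ((l1, l2, l3, l4), (d1, d2, d3, d4), c) := p in
  match g with
  | R0 => p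
  | Hsym => ((l4, l3, l2, l1), (d3, d2, d1, d4), c)
  | Vsym => ((l2, l1, l4, l3), (d1, d4, d3, d2), c)
  | R180 => ((l3, l4, l1, l2), (d3, d4, d1, d2), c)
  end.

Definition canonical_partition (p : partition_t) : bool :=
  let: ((l1, l2, l3, l4), (d1, d2, d3, d4), _) := p in
  [&& l2 <= l1, l3 <= l1, l4 <= l1,
      (l1 == l3) ==> (l4 <= l2) &&
        ((l2 == l4) ==> (d3 <= d1) && ((d1 == d3) ==> (d4 <= d2))),
      (l1 == l2) ==> (l4 <= l3) && ((l3 == l4) ==> (d4 <= d2)) &
      (l1 == l4) ==> (l3 <= l2) && ((l2 == l3) ==> (d3 <= d1))].

Lemma canonical_partition_exists (p : partition_t) :
  exists g, canonical_partition (sym_partition g p).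
Proof.
have : [|| canonical_partition (sym_partition R0 p),
           canonical_partition (sym_partition Hsym p),
           canonical_partition (sym_partition Vsym p) |
           canonical_partition (sym_partition R180 p)].
  by case: p => -[[[[l1 l2] l3] l4] [[[d1 d2] d3] d4]] c /=; lia.
by case/or4P; eexists; eassumption.
Qed.

Lemma canonical_partition_unique (g : sym) (p : partition_t) :
  canonical_partition p -> canonical_partition (sym_partition g p) ->
  sym_partition g p = p.
Proof.
case: p => -[[[[l1 l2] l3] l4] [[[d1 d2] d3] d4]] c.
by case: g => //= h h'; congr (_, _, _); congr (_, _, _, _); lia.
Qed.

Section SymmetricBoards.
Variables (k l : nat).
Implicit Types (g : sym) (B : board k l).

Lemma sym_actK g : involutive (@sym_act k l g).
Proof. by case: g => -[i j] //=; rewrite !rev_ordK. Qed.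

Lemma mem_sym_board g B x : (x \in sym_board g B) = (sym_act g x \in B).
Proof. by rewrite -{1}[x](sym_actK g) mem_imset //; apply: inv_inj (sym_actK g). Qed.

Lemma card_sym_board g B : #|sym_board g B| = #|B|.
Proof. by rewrite card_imset //; apply: inv_inj (sym_actK g). Qed.

Lemma count_in_sym_board g B P :
  count_in (sym_board g B) P = count_in B (P \o sym_act g).
Proof.
rewrite /count_in -(card_preimset _ (inv_inj (sym_actK g))).
by apply: eq_card => x; rewrite !inE mem_sym_board /= sym_actK.
Qed.

Lemma board_partition_sym g B :
  board_partition (sym_board g B) = sym_partition g (board_partition B).
Proof.
rewrite /board_partition /lam1 /lam2 /lam3 /lam4 /del1 /del2 /del3 /del4 /cen.
rewrite !count_in_sym_board.
case: g => /=; congr (_, _, _); try congr (_, _, _, _);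
  apply: eq_card => -[i j]; rewrite !inE /=; congr andb;
  have := ltn_ord i; have := ltn_ord j; lia.
Qed.

End SymmetricBoards.

Lemma in_BbarE k l r (B : board k l) :
  in_Bbar r B <-> in_B r B /\ canonical_partition (board_partition B).
Proof.
rewrite /in_Bbar /board_partition /=; split=> [[? [? ? ?] ? ? ?] | [? ?]]; first by split=> //; lia.
by split=> //; try split; lia.
Qed.

Theorem theorem4p7 (k l r : nat) :
  1 <= k -> 1 <= l -> k <> l -> 1 <= r <= (2 * k + 1) * (2 * l + 1) ->
  (* (1) Bbar is a union of full board-partition classes of B(r)
         (the classes being automatically disjoint) *)
  (exists P : pred ((nat * nat * nat * nat) * (nat * nat * nat * nat) * nat),
     forall B : board k l,
       in_Bbar r B <-> (in_B r B /\ P (board_partition B))) /\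
  (* (2) every board is equivalent to a board of Bbar *)
  (forall B : board k l, in_B r B ->
     exists B' : board k l, equiv_boards B B' /\ in_Bbar r B') /\
  (* (3) equivalent boards of Bbar have the same board partition *)
  (forall B B' : board k l, in_Bbar r B -> in_Bbar r B' ->
     equiv_boards B B' -> board_partition B = board_partition B').
Proof.
(* Only <H,V> is involved, not the quarter turn, so square grids and the
   bounds on r need no special care. *)
move=> _ _ _ _; split; last split.
- by exists canonical_partition => B; apply: in_BbarE.
- move=> B cardB; have [g canon_gB] := canonical_partition_exists (board_partition B).
  exists (sym_board g B); split; first by exists g.
  by rewrite in_BbarE board_partition_sym /in_B card_sym_board.
- move=> B B' /in_BbarE[_ canonB] + [g eB']; rewrite {}eB' => /in_BbarE[_].
  rewrite board_partition_sym.
  by move/(canonical_partition_unique canonB)->.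
Qed.
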